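(* Let $C\subseteq H$ be nonempty, closed and convex, take $B=N_C$ in Algorithm 3.1, and suppose Assumption 3.1 holds, with $p_n\ge0$, $\mu_n\ge 0$ and $\sum_n p_n<\infty$. Let $\{w_n\},\{y_n\}$ be generated by Algorithm 3.1. If $\lim_{n\to\infty}\|w_n-y_n\|=0$ and $\{w_n\}$ converges weakly to some $z\in H$, then $z\in S$.
   Context: Let $H$ be a real Hilbert space, $A:H\to H$ a single-valued mapping and $B:H\to 2^H$ a set-valued mapping, and let $\Omega:=(A+B)^{-1}(0)=\{x\in H:\ 0\in Ax+Bx\}$. Algorithm 3.1 is the following iteration. Fix $x_0,x_1\in H$, $\mu\in(0,1)$, $\lambda_1>0$, real sequences $\{\alpha_n\},\{\beta_n\},\{\theta_n\}$ and nonnegative real sequences $\{\mu_n\},\{p_n\}$. For $n=1,2,\dots$ compute $w_n=x_n+\alpha_n(x_n-x_{n-1})$, $z_n=x_n+\beta_n(x_n-x_{n-1})$, $y_n=(I+\lambda_nB)^{-1}(I-\lambda_nA)w_n$, and set $\lambda_{n+1}=\min\{(\mu_n+\mu)\|w_n-y_n\|/\|Aw_n-Ay_n\|,\ \lambda_n+p_n\}$ if $Aw_n\neq Ay_n$, and $\lambda_{n+1}=\lambda_n+p_n$ otherwise. If $w_n=y_n$ the algorithm stops (then $y_n\in\Omega$). Otherwise set $x_{n+1}=(1-\theta_n)z_n+\theta_n\big(y_n-\lambda_n(Ay_n-Aw_n)\big)$ and continue. Here $I$ is the identity and $(I+\lambda B)^{-1}$ is the resolvent of $B$. Throughout, it is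 assumed that the algorithm does not stop, so that infinite sequences $\{x_n\},\{w_n\},\{z_n\},\{y_n\},\{\lambda_n\}$ are generated. $N_C(x)=\{z\in H:\langle z,y-x\rangle\le0\ \forall y\in C\}$ for $x\in C$ and $N_C(x)=\emptyset$ otherwise is the normal cone; $P_C$ is the metric projection onto $C$, and $(I+\lambda N_C)^{-1}=P_C$. $S$ denotes the solution set of the variational inequality VI$(A,C)$: find $x^*\in C$ with $\langle Ax^*,y-x^*\rangle\ge0$ for all $y\in C$. Assumption 3.1: (i) $S\neq\emptyset$; (ii) $A$ is pseudomonotone (i.e. $\langle Ax,y-x\rangle\ge0$ implies $\langle Ay,y-x\rangle\ge0$) and Lipschitz continuous on $H$, and whenever $x_n\rightharpoonup w^*$ weakly in $H$, one has $\|Aw^*\|\le\liminf_{n\to\infty}\|Ax_n\|$. *)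

From HB Require Import structures.
From mathcomp Require Import all_boot all_order all_algebra.
From mathcomp Require Import all_classical all_reals all_analysis.
Set Implicit Arguments. Unset Strict Implicit. Unset Printing Implicit Defensive.
Import Order.TTheory GRing.Theory Num.Theory.
Import numFieldNormedType.Exports.
Local Open Scope classical_set_scope.
Local Open Scope ring_scope.

(* A real Hilbert space is a complete normed space H together with an inner
   product ip whose induced norm is the norm of H. *)
Definition is_inner_product (R : realType) (H : normedModType R)
  (ip : H -> H -> R) : Prop :=
  [/\ (forall x y, ip x y = ip y x),
      (forall a x y z, ip (a *: x + y) z = a * ip x z + ip y z),
      (forall x, 0 <= ip x x),
      (forall x, ip x x = 0 -> x = 0)
    & (forall x, `|x| = Num.sqrt (ip x x))].

Definition weak_cvg (R : realType) (H : normedModType R)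
  (ip : H -> H -> R) (u : nat -> H) (z : H) : Prop :=
  forall v, (fun n => ip (u n) v) @ \oo --> ip z v.

Definition normal_cone (R : realType) (H : normedModType R)
  (ip : H -> H -> R) (C : set H) (x : H) : set H :=
  [set v | C x /\ forall c, C c -> ip v (c - x) <= 0].

(* y = (I + lam B)^{-1} u, i.e. u \in y + lam B y *)
Definition resolvent_rel (R : realType) (H : normedModType R)
  (B : H -> set H) (lam : R) (u y : H) : Prop :=
  exists b, B y b /\ u = y + lam *: b.

Definition VI_sol (R : realType) (H : normedModType R)
  (ip : H -> H -> R) (A : H -> H) (C : set H) : set H :=
  [set x | C x /\ forall c, C c -> 0 <= ip (A x) (c - x)].

Definition pseudomonotone (R : realType) (H : normedModType R)
  (ip : H -> H -> R) (A : H -> H) : Prop :=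
  forall x y, 0 <= ip (A x) (y - x) -> 0 <= ip (A y) (y - x).

Definition lipschitz_on_H (R : realType) (H : normedModType R) (A : H -> H) :=
  exists L : R, forall x y, `|A x - A y| <= L * `|x - y|.

Definition weak_seq_lsc_normA (R : realType) (H : normedModType R)
  (ip : H -> H -> R) (A : H -> H) : Prop :=
  forall (u : nat -> H) (ws : H), weak_cvg ip u ws ->
    ((`|A ws|)%:E <= limn_einf (fun n => (`|A (u n)|)%:E))%E.

(* Algorithm 3.1 with B = N_C, assumed never to stop (w_n <> y_n, n >= 1). *)
Definition algorithm31 (R : realType) (H : normedModType R)
  (ip : H -> H -> R) (A : H -> H) (C : set H) (mu lam1 : R)
  (alpha beta theta mun p : nat -> R)
  (x w z y : nat -> H) (lam : nat -> R) : Prop :=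
  [/\ 0 < mu < 1, 0 < lam1 /\ lam 1%N = lam1,
      (forall n, 0 <= mun n), (forall n, 0 <= p n)
    & forall n, (1 <= n)%N ->
      [/\ w n = x n + alpha n *: (x n - x n.-1)
          /\ z n = x n + beta n *: (x n - x n.-1),
          resolvent_rel (normal_cone ip C) (lam n) (w n - lam n *: A (w n)) (y n),
          lam n.+1 = (if A (w n) != A (y n) then
                        Num.min ((mun n + mu) * `|w n - y n| / `|A (w n) - A (y n)|)
                                (lam n + p n)
                      else lam n + p n),
          w n != y n
        & x n.+1 = (1 - theta n) *: z n
                   + theta n *: (y n - lam n *: (A (y n) - A (w n)))]].

From HB Require Import structures.
From mathcomp Require Import all_boot all_order all_algebra.
From mathcomp Require Import all_classical all_reals all_analysis.
From mathcomp Require Import ring lra.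
Set Implicit Arguments. Unset Strict Implicit. Unset Printing Implicit Defensive.
Import Order.TTheory GRing.Theory Num.Theory.
Import numFieldNormedType.Exports.
Local Open Scope classical_set_scope.
Local Open Scope ring_scope.

(* Since y_n is the projection of w_n - lam_n A w_n onto C and the step sizes
   lam_n stay above min(lam_1, mu/L), the gap <A w_n, c - w_n> is asymptotically
   nonnegative for every c in C.  The weak limit z lies in C because closed
   convex sets are weakly sequentially closed and w_n - y_n -> 0.  If A z <> 0,
   weak lower semicontinuity of ||A|| keeps ||A w_n|| away from 0, so shifting c
   slightly along A w_n makes the gap nonnegative, and pseudomonotonicity moves
   it onto A at the shifted point; letting the shift vanish yields the Minty
   inequality <A c, c - z> >= 0 on C, which for Lipschitz A on convex C gives
   z in S. *)

Lemma ge0_of_ge_Nscale (R : realFieldType) (a K : R) :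
  (forall e, 0 < e -> e <= 1 -> - (e * K) <= a) -> 0 <= a.
Proof.
move=> h; apply/ler_addgt0Pr => e e0.
set k := `|K| + 1; have k0 : 0 < k by rewrite ltr_wpDl.
set e' := Num.min 1 (e / k).
have e'0 : 0 < e' by rewrite lt_min ltr01 divr_gt0.
have e'k : e' * k <= e by rewrite -ler_pdivlMr // ge_min lexx orbT.
have : e' * K <= e' * `|K| by apply: ler_wpM2l; [exact: ltW | exact: ler_norm].
have e'1 : e' <= 1 by rewrite ge_min lexx.
have := h e' e'0 e'1.
rewrite /k mulrDr mulr1 in e'k; lra.
Qed.

Lemma limn_einf_gt_near (R : realType) (u : nat -> R) (a : R) :
  (a%:E < limn_einf (fun n => (u n)%:E))%E -> \forall n \near \oo, a < u n.
Proof.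
rewrite limn_einf_lim (cvg_lim _ (@cvg_einfs_sup _ _)) //.
move=> /ereal_sup_gt [_ [n0 _ <-]] h.
exists n0 => // k /= hk; rewrite -lte_fin (lt_le_trans h) //.
by apply: ereal_inf_lbound; exists k.
Qed.

Lemma lipschitz_on_H_pos (R : realType) (H : normedModType R) (A : H -> H) :
  lipschitz_on_H A -> exists2 L, 0 < L & forall x y, `|A x - A y| <= L * `|x - y|.
Proof.
move=> [L hL]; exists (`|L| + 1) => [|u v]; first by rewrite ltr_wpDl.
by rewrite (le_trans (hL u v)) // ler_wpM2r // (le_trans (ler_norm _)) // lerDl.
Qed.

Section InnerProduct.
Context {R : realType} {H : normedModType R} {ip : H -> H -> R}.
Hypothesis hip : is_inner_product ip.

Lemma ipC x y : ip x y = ip y x.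
Proof. by case: hip. Qed.

Lemma ipDZl a x y z : ip (a *: x + y) z = a * ip x z + ip y z.
Proof. by case: hip. Qed.

Lemma ip0l z : ip 0 z = 0.
Proof. by have := ipDZl 1 0 0 z; rewrite scaler0 addr0 mul1r; lra. Qed.

Lemma ipDl x y z : ip (x + y) z = ip x z + ip y z.
Proof. by rewrite -(scale1r x) ipDZl mul1r scale1r. Qed.

Lemma ipZl a x z : ip (a *: x) z = a * ip x z.
Proof. by rewrite -(addr0 (a *: x)) ipDZl ip0l addr0. Qed.

Lemma ipBl x y z : ip (x - y) z = ip x z - ip y z.
Proof. by rewrite -scaleN1r ipDl ipZl mulN1r. Qed.

Lemma ipDr x y z : ip z (x + y) = ip z x + ip z y.
Proof. by rewrite ipC ipDl !(ipC z). Qed.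

Lemma ipZr a x z : ip z (a *: x) = a * ip z x.
Proof. by rewrite ipC ipZl ipC. Qed.

Lemma ipBr x y z : ip z (x - y) = ip z x - ip z y.
Proof. by rewrite ipC ipBl !(ipC z). Qed.

Lemma ipxx x : ip x x = `|x| ^+ 2.
Proof. by case: hip => _ _ h _ ->; rewrite sqr_sqrtr. Qed.

Lemma norm2D u v : `|u + v| ^+ 2 = `|u| ^+ 2 + 2 * ip u v + `|v| ^+ 2.
Proof. by rewrite -!ipxx ipDl !ipDr (ipC v u); ring. Qed.

Lemma norm2B u v : `|u - v| ^+ 2 = `|u| ^+ 2 - 2 * ip u v + `|v| ^+ 2.
Proof. by rewrite -!ipxx ipBl !ipBr (ipC v u); ring. Qed.

Lemma cauchy_schwarz x y : `|ip x y| <= `|x| * `|y|.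
Proof.
have [->|y0] := eqVneq y 0; first by rewrite ipC ip0l normr0 mulr_ge0.
set b := ip x y; set c := `|y| ^+ 2.
have c0 : 0 < c by rewrite exprn_gt0 // normr_gt0.
(* expand 0 <= |x + t y|^2 at the minimizing t = - b / c *)
have : 0 <= `|x + (- b / c) *: y| ^+ 2 by rewrite exprn_ge0.
rewrite norm2D ipZr normrZ exprMn real_normK ?num_real // -/b -/c.
have -> : `|x| ^+ 2 + 2 * (- b / c * b) + (- b / c) ^+ 2 * c
          = (`|x| ^+ 2 * c - b ^+ 2) / c by field; rewrite gt_eqF.
rewrite pmulr_lge0 ?invr_gt0 // subr_ge0 => hb.
rewrite -ler_sqr ?nnegrE ?mulr_ge0 // real_normK ?num_real //.
by rewrite exprMn; exact: hb.
Qed.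

Lemma ge_Nnorm_ip x y : - (`|x| * `|y|) <= ip x y.
Proof. by have := cauchy_schwarz x y; rewrite ler_norml => /andP[]. Qed.

Lemma le_norm_ip x y : ip x y <= `|x| * `|y|.
Proof. exact: le_trans (ler_norm _) (cauchy_schwarz _ _). Qed.

Lemma weak_cvg_perturb (w y : nat -> H) (z : H) :
  weak_cvg ip w z -> (fun n => `|w n - y n|) @ \oo --> 0 -> weak_cvg ip y z.
Proof.
move=> hw hwy v.
have hd : (fun n => ip (w n - y n) v) @ \oo --> 0.
  apply: (@squeeze_cvgr _ _ _ _ (fun n => - (`|w n - y n| * `|v|))
                              (fun n => `|w n - y n| * `|v|)).
  - by apply: nearW => n; rewrite -ler_norml; exact: cauchy_schwarz.
  - by rewrite -oppr0 -(mul0r `|v|); apply: cvgN; exact: (cvgM hwy (cvg_cst _)).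
  - by rewrite -(mul0r `|v|); apply: (cvgM hwy (cvg_cst _)).
have -> : (fun n => ip (y n) v) = (fun n => ip (w n) v - ip (w n - y n) v).
  by apply: funext => n; rewrite ipBl; ring.
by rewrite -[ip z v]subr0; apply: cvgB.
Qed.

Lemma normal_cone_resolvent (C : set H) (lam : R) (u y : H) :
  0 <= lam -> resolvent_rel (normal_cone ip C) lam u y ->
  C y /\ forall c, C c -> ip (u - y) (c - y) <= 0.
Proof.
move=> lam0 [b [[Cy hb] ->]]; split => // c Cc.
by rewrite addrC addKr ipZl mulr_ge0_le0 ?hb.
Qed.

Lemma near_nearest_point_ineq (C : set H) (z c c' : H) (dl t : R) :
  convex_set (C : set (convex_lmodType H)) ->
  (forall c'', C c'' -> `|z - c| ^+ 2 <= `|z - c''| ^+ 2 + dl) ->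
  C c -> C c' -> 0 < t -> t <= 1 ->
  2 * t * ip (c' - c) (z - c) <= dl + t ^+ 2 * `|c' - c| ^+ 2.
Proof.
move=> cvC hc Cc Cc' t0 t1.
have Cct : C (t *: c' + (1 - t) *: c).
  by have /set_mem := cvC c' c (Itv01 (ltW t0) t1) (mem_set Cc') (mem_set Cc).
have e : z - (t *: c' + (1 - t) *: c) = (z - c) - t *: (c' - c).
  rewrite scalerBr scalerBl scale1r opprD opprB !addrA.
  by rewrite opprB addrA [RHS]addrAC [LHS]addrAC [X in X + _ = _]addrAC.
have := hc _ Cct; rewrite e (norm2B (z - c)) ipZr normrZ exprMn.
rewrite ger0_norm ?(ltW t0) // (ipC (z - c)); lra.
Qed.

Lemma near_nearest_point_weak_limit (C : set H) (y : nat -> H) (z c : H) (Y dl t : R) :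
  convex_set (C : set (convex_lmodType H)) -> (\forall n \near \oo, C (y n)) ->
  (forall n, `|y n| <= Y) -> weak_cvg ip y z ->
  (forall c', C c' -> `|z - c| ^+ 2 <= `|z - c'| ^+ 2 + dl) -> C c -> 0 < t -> t <= 1 ->
  2 * t * `|z - c| ^+ 2 <= dl + t ^+ 2 * (2 * (Y + `|z|) ^+ 2 + 2 * `|z - c| ^+ 2).
Proof.
move=> cvC Cy hY hw hc Cc t0 t1.
have Y0 : 0 <= Y by apply: le_trans (hY 0%N).
have hl : (fun n => 2 * t * ip (y n - c) (z - c)) @ \oo --> 2 * t * `|z - c| ^+ 2.
  rewrite -ipxx ipBl; under eq_fun do rewrite ipBl.
  exact: cvgM (cvg_cst _) (cvgB (hw _) (cvg_cst _)).
rewrite -(cvg_lim _ hl) //; apply: limr_le; first exact: cvgP hl.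
apply: filterS Cy => n Cyn.
have : `|y n - c| ^+ 2 <= 2 * (Y + `|z|) ^+ 2 + 2 * `|z - c| ^+ 2.
  have : `|y n - c| <= (Y + `|z|) + `|z - c|.
    have -> : y n - c = (y n - z) + (z - c) by rewrite addrA subrK.
    rewrite (le_trans (ler_normD _ _)) // lerD2r.
    by rewrite (le_trans (ler_normB _ _)) // lerD2r.
  move=> /(lerXn2r 2 (normr_ge0 _)) hsq.
  have := sqr_ge0 ((Y + `|z|) - `|z - c|).
  have := hsq (addr_ge0 (addr_ge0 Y0 (normr_ge0 _)) (normr_ge0 _)).
  nra.
move=> /(ler_wpM2l (exprn_ge0 2 (ltW t0))).
have := near_nearest_point_ineq cvC hc Cc Cyn t0 t1.
lra.
Qed.

End InnerProduct.

Section CompleteInnerProduct.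
Context {R : realType} {H : completeNormedModType R} {ip : H -> H -> R}.
Hypothesis hip : is_inner_product ip.

Lemma weak_cvg_bounded (w : nat -> H) (z : H) :
  weak_cvg ip w z -> exists M, forall n, `|w n| <= M.
Proof.
move=> hw.
pose F : set (H -> R^o) := [set f | exists n, f = ip (w n)].
have hF f : F f -> bounded_fun_norm f /\ linear f.
  move=> [n ->]; split; last by move=> a u v; rewrite /= (ipDr hip) (ipZr hip).
  move=> r; exists (`|w n| * r) => v hv.
  by rewrite (le_trans (cauchy_schwarz hip _ _)) // ler_wpM2l.
have hpb : pointwise_bounded F.
  move=> v; have /cvg_seq_bounded [M [_ HM]] : cvgn (fun n => ip (w n) v : R^o).
    exact: cvgP (hw v).
  by exists (M + 1) => f [n ->]; apply: (HM (M + 1)) => //; rewrite ltrDl.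
have [M HM] := Banach_Steinhauss hF hpb 1.
exists M => n; have [->|wn0] := eqVneq (w n) 0.
  by apply: le_trans (HM _ (ex_intro _ n erefl) 0 _); rewrite normr0.
(* test the bound at the unit vector in the direction of w n *)
have := HM _ (ex_intro _ n erefl) (`|w n|^-1 *: w n).
rewrite (ipZr hip) (ipxx hip) normrZ normfV normr_id mulVf ?normr_eq0 //.
by rewrite expr2 mulrA mulVf ?normr_eq0 // mul1r ger0_norm // => /(_ (lexx _)).
Qed.

Lemma closed_convex_weak_seq_closed (C : set H) (y : nat -> H) (z : H) :
  closed C -> convex_set (C : set (convex_lmodType H)) ->
  (\forall n \near \oo, C (y n)) -> weak_cvg ip y z -> C z.
Proof.
move=> clC cvC Cy hw.
have [Y hY] := weak_cvg_bounded hw.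
pose D := (fun c => `|z - c| ^+ 2) @` C.
have hiD : has_inf D.
  split; last by exists 0 => _ [c _ <-]; exact: exprn_ge0.
  by have [N _ /(_ N (leqnn N)) CyN] := Cy; exists (`|z - y N| ^+ 2), (y N).
set d2 := inf D.
set K := 1 + 2 * (Y + `|z|) ^+ 2 + 2 * (d2 + 1).
have d2_small t : 0 < t -> t <= 1 -> d2 <= t * (K / 2).
  move=> t0 t1.
  have [_ [c Cc <-] hc] := inf_adherent (exprn_gt0 2 t0) hiD.
  have hc' c' : C c' -> `|z - c| ^+ 2 <= `|z - c'| ^+ 2 + t ^+ 2.
    move=> Cc'; have : d2 <= `|z - c'| ^+ 2 by apply: ge_inf; [case: hiD | exists c'].
    lra.
  have := near_nearest_point_weak_limit hip cvC Cy hY hw hc' Cc t0 t1.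
  have : d2 <= `|z - c| ^+ 2 by apply: ge_inf; [case: hiD | exists c].
  have : t ^+ 2 <= 1 by rewrite expr_le1 // ltW.
  rewrite /K !expr2 in hc *; nra.
have d2le0 : d2 <= 0.
  rewrite -oppr_ge0; apply: (@ge0_of_ge_Nscale _ _ (K / 2)) => t t0 t1.
  by rewrite lerNr opprK; apply: d2_small.
apply: clC => B /nbhs_ballP [eps eps0 hB].
have [_ [c Cc <-] hc] := inf_adherent (exprn_gt0 2 eps0) hiD.
exists c; split => //; apply: hB.
rewrite -ball_normE /ball_ /= ltNge; apply/negP => h.
have : eps ^+ 2 <= `|z - c| ^+ 2 by rewrite !expr2 ler_pM // ltW.
lra.
Qed.

End CompleteInnerProduct.

Section Minty.
Context {R : realType} {H : normedModType R} {ip : H -> H -> R}.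
Hypothesis hip : is_inner_product ip.
Variables (A : H -> H) (L : R).
Hypothesis hL : forall x y, `|A x - A y| <= L * `|x - y|.

Lemma minty_VI_sol (C : set H) (z : H) :
  convex_set (C : set (convex_lmodType H)) -> C z ->
  (forall c, C c -> 0 <= ip (A c) (c - z)) -> VI_sol ip A C z.
Proof.
move=> cvC Cz hm; split => // c Cc.
apply: (@ge0_of_ge_Nscale _ _ (L * `|c - z| ^+ 2)) => t t0 t1.
set ct := t *: c + (1 - t) *: z.
have Cct : C ct.
  by have /set_mem := cvC c z (Itv01 (ltW t0) t1) (mem_set Cc) (mem_set Cz).
have ectz : ct - z = t *: (c - z).
  by rewrite /ct scalerBl scale1r scalerBr addrA addrAC addrK.
have : 0 <= ip (A ct) (c - z).
  by have := hm _ Cct; rewrite ectz (ipZr hip) pmulr_rge0.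
have : ip (A ct - A z) (c - z) <= t * (L * `|c - z| ^+ 2).
  have hAct : `|A ct - A z| <= t * (L * `|c - z|).
    by rewrite mulrCA -[t]ger0_norm ?(ltW t0) // -normrZ -ectz hL.
  apply: le_trans (le_norm_ip hip _ _) _.
  by apply: le_trans (ler_wpM2r (normr_ge0 _) hAct) _; rewrite expr2 !mulrA.
rewrite (ipBl hip); lra.
Qed.

Lemma pseudomonotone_perturb (u v : H) (e : R) :
  pseudomonotone ip A -> A u != 0 -> - e <= ip (A u) (v - u) ->
  0 <= ip (A (v + (e / `|A u| ^+ 2) *: A u)) (v + (e / `|A u| ^+ 2) *: A u - u).
Proof.
move=> pm Au0 hv; apply: pm.
rewrite addrAC (ipDr hip) (ipZr hip) (ipxx hip) divfK; first lra.
by rewrite expf_neq0 // normr_eq0.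
Qed.

Lemma weak_limit_minty (w : nat -> H) (z c : H) (Wb a : R) :
  pseudomonotone ip A -> 0 <= L -> (forall n, `|w n| <= Wb) ->
  weak_cvg ip w z -> 0 < a -> (\forall n \near \oo, a <= `|A (w n)|) ->
  (forall e, 0 < e -> \forall n \near \oo, - e <= ip (A (w n)) (c - w n)) ->
  0 <= ip (A c) (c - z).
Proof.
move=> pm L0 hWb hw a0 haw hkey.
set S := `|c| + a^-1 + Wb.
apply: (@ge0_of_ge_Nscale _ _ (L * S / a + `|A c| / a + 1)) => e e0 e1.
have hz : \forall n \near \oo, `|ip z (A c) - ip (w n) (A c)| < e.
  exact: cvgr_dist_lt (hw _) _ e0.
have [n [han [hkn hzn]]] := filter_ex (filterI haw (filterI (hkey e e0) hz)).
have Awn0 : A (w n) != 0 by rewrite -normr_eq0 gt_eqF // (lt_le_trans a0).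
have := pseudomonotone_perturb pm Awn0 hkn.
set d := (e / _) *: _; set c' := c + d => hc'.
have g0 : 0 < `|A (w n)| by rewrite (lt_le_trans a0).
have hd : `|d| <= e / a.
  have -> : `|d| = e / `|A (w n)|.
    rewrite normrZ ger0_norm; first by field; rewrite gt_eqF.
    by rewrite divr_ge0 ?exprn_ge0 ?ltW.
  by apply: ler_wpM2l; [exact: ltW | rewrite lef_pV2 ?posrE].
have hd1 : `|d| <= a^-1 by rewrite (le_trans hd) // ler_pdivrMr // mulVf ?gt_eqF // e1.
have : ip (A c' - A c) (c' - w n) <= L * (e / a) * S.
  rewrite (le_trans (le_norm_ip hip _ _)) // ler_pM ?mulr_ge0 //.
    by rewrite (le_trans (hL _ _)) // /c' addrAC subrr add0r ler_wpM2l.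
  rewrite /S (le_trans (ler_normB _ _)) // lerD //.
  by rewrite (le_trans (ler_normD _ _)) // lerD2l.
have : ip (A c) d <= `|A c| * (e / a).
  by rewrite (le_trans (le_norm_ip hip _ _)) // ler_wpM2l.
have : - e <= ip (A c) (w n - z).
  move: hzn; rewrite (ipBr hip) !(ipC hip (A c)) distrC => /ltW.
  by rewrite ler_norml => /andP[].
have -> : ip (A c) (c - z) = ip (A c') (c' - w n) - ip (A c' - A c) (c' - w n)
                            - ip (A c) d + ip (A c) (w n - z).
  by rewrite (ipBl hip) /c' !(ipBr hip) !(ipDr hip); ring.
have -> : e * (L * S / a + `|A c| / a + 1) = L * (e / a) * S + `|A c| * (e / a) + e.
  by field; rewrite gt_eqF.
lra.
Qed.

End Minty.

Section Algorithm31.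
Context {R : realType} {H : normedModType R} {ip : H -> H -> R}.
Hypothesis hip : is_inner_product ip.
Variables (A : H -> H) (C : set H) (mu lam1 : R).
Variables (alpha beta theta mun p : nat -> R) (x w z y : nat -> H) (lam : nat -> R).
Hypothesis alg : algorithm31 ip A C mu lam1 alpha beta theta mun p x w z y lam.
Variable L : R.
Hypothesis L0 : 0 < L.
Hypothesis hL : forall u v, `|A u - A v| <= L * `|u - v|.

Let m := Num.min lam1 (mu / L).

Lemma algorithm31_stepsize_ge n : (1 <= n)%N -> m <= lam n.
Proof.
case: alg => /andP[mu0 _] [_ lam1E] mun0 p0 step.
elim: n => // -[_ _|n IH _]; first by rewrite lam1E ge_min lexx.
have [_ _ -> wy _] := step n.+1 isT.
have lam_le : m <= lam n.+1 + p n.+1 by rewrite (le_trans (IH isT)) // lerDl.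
case: ifP => // hA; rewrite le_min lam_le andbT ge_min; apply/orP; right.
have Ad0 : 0 < `|A (w n.+1) - A (y n.+1)| by rewrite normr_gt0 subr_eq0.
rewrite ler_pdivlMr //.
apply: le_trans (ler_wpM2l _ (hL _ _)) _; first by rewrite divr_ge0 ?ltW.
by rewrite mulrA divfK ?gt_eqF // ler_wpM2r // lerDr.
Qed.

Lemma algorithm31_stepsize_bound_gt0 : 0 < m.
Proof. by case: alg => /andP[mu0 _] [lam10 _] _ _ _; rewrite lt_min lam10 divr_gt0. Qed.

Lemma algorithm31_resolvent n : (1 <= n)%N ->
  C (y n) /\ forall c, C c -> ip (w n - lam n *: A (w n) - y n) (c - y n) <= 0.
Proof.
move=> n1; case: alg => _ _ _ _ /(_ n n1) [_ hres _ _ _].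
apply: (normal_cone_resolvent hip _ hres).
exact: ltW (lt_le_trans algorithm31_stepsize_bound_gt0 (algorithm31_stepsize_ge n1)).
Qed.

Lemma algorithm31_resolvent_ineq n c : (1 <= n)%N -> C c ->
  - (`|w n - y n| * `|c - y n|) / m <= ip (A (w n)) (c - y n).
Proof.
move=> n1 Cc; have m0 := algorithm31_stepsize_bound_gt0.
have mlam := algorithm31_stepsize_ge n1.
have := (algorithm31_resolvent n1).2 c Cc.
rewrite !(ipBl hip) (ipZl hip) ler_pdivrMr //.
have := ge_Nnorm_ip hip (w n - y n) (c - y n); rewrite (ipBl hip).
have [X0|X0] := leP 0 (ip (A (w n)) (c - y n)).
  have := mulr_ge0 (normr_ge0 (w n - y n)) (normr_ge0 (c - y n)).
  by have := mulr_ge0 (ltW m0) X0; lra.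
have := ler_wnM2r (ltW X0) mlam; lra.
Qed.

Lemma algorithm31_gap_liminf (Wb : R) (c : H) :
  (forall n, `|w n| <= Wb) -> (fun n => `|w n - y n|) @ \oo --> 0 -> C c ->
  forall e, 0 < e -> \forall n \near \oo, - e <= ip (A (w n)) (c - w n).
Proof.
move=> hWb hwy Cc e e0; have m0 := algorithm31_stepsize_bound_gt0.
have Wb0 : 0 <= Wb by apply: le_trans (hWb 0%N).
set Q := `|c| + Wb + 1; set B := L * Wb + `|A 0|.
have B0 : 0 <= B by rewrite addr_ge0 // mulr_ge0 // ltW.
have K0 : 0 < Q / m + B.
  have Q0 : 0 < Q by rewrite ltr_wpDl ?addr_ge0.
  by have := divr_gt0 Q0 m0; lra.
near=> n.
have n1 : (1 <= n)%N by near: n; exact: nbhs_infty_ge.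
have r1 : `|w n - y n| <= 1 by near: n; exact: cvgr_le hwy 1 ltr01.
have reK : `|w n - y n| * (Q / m + B) < e.
  by rewrite -ltr_pdivlMr //; near: n; exact: cvgr_lt hwy _ (divr_gt0 e0 K0).
have hcy : `|c - y n| <= Q.
  have -> : y n = w n - (w n - y n) by rewrite opprB addrC subrK.
  rewrite (le_trans (ler_normB _ _)) // /Q -addrA lerD2l.
  by rewrite (le_trans (ler_normB _ _)) // lerD // normrN.
have hAw : `|A (w n)| <= B.
  rewrite -[A (w n)](subrK (A 0)) (le_trans (ler_normD _ _)) // lerD2r.
  by rewrite (le_trans (hL _ _)) // subr0 ler_pM2l.
have := algorithm31_resolvent_ineq n1 Cc.
have := ge_Nnorm_ip hip (A (w n)) (y n - w n); rewrite distrC.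
have : `|A (w n)| * `|w n - y n| <= B * `|w n - y n| by rewrite ler_wpM2r.
have : `|w n - y n| * `|c - y n| / m <= `|w n - y n| * Q / m.
  by apply: ler_wpM2r; [rewrite invr_ge0 ltW | exact: ler_wpM2l].
have -> : c - w n = (c - y n) + (y n - w n) by rewrite addrA subrK.
rewrite (ipDr hip (c - y n)); lra.
Unshelve. all: by end_near.
Qed.

End Algorithm31.

Theorem proposition3p2 (R : realType) (H : completeNormedModType R)
  (ip : H -> H -> R) (A : H -> H) (C : set H) (mu lam1 : R)
  (alpha beta theta mun p : nat -> R)
  (x w z y : nat -> H) (lam : nat -> R) (zs : H) :
  is_inner_product ip ->
  C !=set0 -> closed C -> convex_set (C : set (convex_lmodType H)) ->
  VI_sol ip A C !=set0 ->
  pseudomonotone ip A -> lipschitz_on_H A -> weak_seq_lsc_normA ip A ->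
  cvgn (series p) ->
  algorithm31 ip A C mu lam1 alpha beta theta mun p x w z y lam ->
  (fun n => `|w n - y n|) @ \oo --> 0 ->
  weak_cvg ip w zs ->
  VI_sol ip A C zs.
Proof.
move=> hip _ clC cvC _ pm /lipschitz_on_H_pos [L L0 hL] lsc _ alg hwy hw.
have [Wb hWb] := weak_cvg_bounded hip hw.
have Czs : C zs.
  apply: (closed_convex_weak_seq_closed hip clC cvC _ (weak_cvg_perturb hip hw hwy)).
  by exists 1%N => // n /(algorithm31_resolvent hip alg L0 hL) [].
have [Az0|Az0] := eqVneq (A zs) 0.
  by split => // c _; rewrite Az0 (ip0l hip).
apply: (minty_VI_sol hip hL cvC Czs) => c Cc.
have Azs2 : 0 < `|A zs| / 2 by rewrite divr_gt0 // normr_gt0.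
apply: (weak_limit_minty hip hL pm (ltW L0) hWb hw Azs2).
  apply: filterS (fun n => @ltW _ _ _ _) (limn_einf_gt_near _).
  rewrite (lt_le_trans _ (lsc w zs hw)) // lte_fin ltr_pdivrMr //.
  by rewrite ltr_pMr ?ltr1n // normr_gt0.
exact: (algorithm31_gap_liminf hip alg L0 hL hWb hwy Cc).
Qed.
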